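(* Let $n\ge 7$ and let $r_1,\ldots,r_n$ be any positive reals. Then there exists a homothetic packing of $n$ cubes with radii $r_1,\ldots,r_n$ and more than $3n-3$ contacts.
   Context: Let $C=\{(x,y,z):-1\le x,y,z\le 1\}\subset\mathbb{R}^3$. A homothetic cube packing with radii $r_1,\ldots,r_n$ is a set $\{C_1,\ldots,C_n\}$ with $C_i=r_iC+p_i$, $p_i\in\mathbb{R}^3$, whose interiors are pairwise disjoint. A contact is an unordered pair $\{i,j\}$, $i\ne j$, with $C_i\cap C_j\ne\emptyset$. *)

From Stdlib Require Import Reals ClassicalEpsilon.
From mathcomp Require Import all_boot.

Set Implicit Arguments.
Local Open Scope R_scope.
Unset Strict Implicit.
Unset Printing Implicit Defensive.

Definition pt : Type := (R * R * R)%type.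

Definition stdC (c : pt) : Prop :=
  let '(c1, c2, c3) := c in
  Rabs c1 <= 1 /\ Rabs c2 <= 1 /\ Rabs c3 <= 1.

Definition hcube (r : R) (p : pt) (x : pt) : Prop :=
  exists c : pt, stdC c /\
    let '(c1, c2, c3) := c in
    let '(p1, p2, p3) := p in
    x = ((r * c1 + p1), (r * c2 + p2), (r * c3 + p3)).

Definition dist2 (x y : pt) : R :=
  let '(x1, x2, x3) := x in
  let '(y1, y2, y3) := y in
  ((x1 - y1) ^ 2 + (x2 - y2) ^ 2 + (x3 - y3) ^ 2).

Definition interior3 (S : pt -> Prop) (x : pt) : Prop :=
  exists eps : R, (0 < eps) /\ forall y : pt, (dist2 x y < eps ^ 2) -> S y.

Definition is_packing (n : nat) (r : 'I_n -> R) (p : 'I_n -> pt) : Prop :=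
  forall i j : 'I_n, i <> j ->
    ~ (exists x : pt, interior3 (hcube (r i) (p i)) x /\ interior3 (hcube (r j) (p j)) x).

Definition contact (n : nat) (r : 'I_n -> R) (p : 'I_n -> pt) (i j : 'I_n) : Prop :=
  exists x : pt, hcube (r i) (p i) x /\ hcube (r j) (p j) x.

Definition contactb (n : nat) (r : 'I_n -> R) (p : 'I_n -> pt) (i j : 'I_n) : bool :=
  if excluded_middle_informative (contact r p i j) then true else false.

Definition num_contacts (n : nat) (r : 'I_n -> R) (p : 'I_n -> pt) : nat :=
  #|[set ij : 'I_n * 'I_n | (ij.1 < ij.2)%N && contactb r p ij.1 ij.2]|.

(** Place cubes in four towers standing on the four quadrants around the z-axis, each cube
    touching the z-axis along an edge, so that two cubes meet as soon as their z-ranges meet.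
    Eight seed cubes, one below and one above the plane z = 0 in each quadrant, all contain
    the origin and give 0 + 1 + ... + 7 = 28 contacts.  Every further cube is put on top of the
    currently lowest tower: its bottom face is then at the minimal tower height, which lies in
    the z-range of each of the four current top cubes, so it gets 4 new contacts.  Hence
    n >= 8 cubes have 28 + 4 (n - 8) > 3 n - 3 contacts, and 7 cubes have 21 > 18. *)

From Stdlib Require Import Reals Lra Psatz ClassicalEpsilon.
From mathcomp Require Import all_boot zify.

Set Implicit Arguments.
Unset Strict Implicit.
Unset Printing Implicit Defensive.

Local Open Scope R_scope.

Lemma Rabs_le_between a b : Rabs a <= b -> - b <= a <= b.
Proof. by move=> le_ab; have := Rle_abs a; have := Rle_abs (- a); rewrite Rabs_Ropp; lra. Qed.

Lemma hcubeP r p1 p2 p3 x1 x2 x3 : 0 < r ->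
  hcube r (p1, p2, p3) (x1, x2, x3) <->
  Rabs (x1 - p1) <= r /\ Rabs (x2 - p2) <= r /\ Rabs (x3 - p3) <= r.
Proof.
move=> r_gt0.
have scale c p : Rabs c <= 1 -> Rabs (r * c + p - p) <= r.
  move=> c_le1; rewrite (_ : r * c + p - p = r * c); last ring.
  by rewrite Rabs_mult Rabs_pos_eq; [nra | lra].
have unscale a : Rabs a <= r -> Rabs (a / r) <= 1.
  move=> /Rabs_le_between a_le; apply: Rabs_le.
  have : a / r * r = a by field; lra.
  by nra.
split.
- move=> [[[c1 c2] c3] [[c1_le [c2_le c3_le]] [-> -> ->]]].
  by split; [|split]; apply: scale.
- move=> [x1_le [x2_le x3_le]].
  exists ((x1 - p1) / r, (x2 - p2) / r, (x3 - p3) / r); split.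
    by split; [|split]; apply: unscale.
  by f_equal; [f_equal|]; field; lra.
Qed.

Lemma interior3_hcube r p1 p2 p3 x1 x2 x3 : 0 < r ->
  interior3 (hcube r (p1, p2, p3)) (x1, x2, x3) ->
  Rabs (x1 - p1) < r /\ Rabs (x2 - p2) < r /\ Rabs (x3 - p3) < r.
Proof.
move=> r_gt0 [e [e_gt0 near_in]].
have shifted d1 d2 d3 : d1 ^ 2 + d2 ^ 2 + d3 ^ 2 < e ^ 2 ->
    Rabs (x1 - p1 + d1) <= r /\ Rabs (x2 - p2 + d2) <= r /\ Rabs (x3 - p3 + d3) <= r.
  move=> d_small; have := near_in (x1 + d1, x2 + d2, x3 + d3).
  have shift x d p : x + d - p = x - p + d by ring.
  have sq_shift x d : (x - (x + d)) ^ 2 = d ^ 2 by ring.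
  by rewrite /dist2 hcubeP // !shift !sq_shift; apply.
have strict a : Rabs (a + e / 2) <= r -> Rabs (a + - (e / 2)) <= r -> Rabs a < r.
  by move=> /Rabs_le_between ? /Rabs_le_between ?; apply: Rabs_def1; lra.
have half_small : (e / 2) ^ 2 < e ^ 2 by nra.
have [? _] := shifted (e / 2) 0 0 ltac:(lra).
have [? _] := shifted (- (e / 2)) 0 0 ltac:(lra).
have [_ [? _]] := shifted 0 (e / 2) 0 ltac:(lra).
have [_ [? _]] := shifted 0 (- (e / 2)) 0 ltac:(lra).
have [_ [_ ?]] := shifted 0 0 (e / 2) ltac:(lra).
have [_ [_ ?]] := shifted 0 0 (- (e / 2)) ltac:(lra).
by split; [|split]; apply: strict; rewrite ?Rplus_0_r.
Qed.

Definition apart (a r b s : R) : Prop := a + r <= b - s \/ b + s <= a - r.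

Lemma hcube_interiors_disjoint r s p1 p2 p3 q1 q2 q3 : 0 < r -> 0 < s ->
  apart p1 r q1 s \/ apart p2 r q2 s \/ apart p3 r q3 s ->
  ~ (exists x, interior3 (hcube r (p1, p2, p3)) x /\ interior3 (hcube s (q1, q2, q3)) x).
Proof.
move=> r_gt0 s_gt0 sep [[[x1 x2 x3]] [/(interior3_hcube r_gt0) in_p /(interior3_hcube s_gt0) in_q]].
move: in_p in_q sep => [/Rabs_def2 ? [/Rabs_def2 ? /Rabs_def2 ?]]
  [/Rabs_def2 ? [/Rabs_def2 ? /Rabs_def2 ?]].
rewrite /apart; lra.
Qed.

Notation quadrant := (bool * bool)%type.

Definition sign (b : bool) : R := if b then 1 else -1.

Lemma apart_sign a b r s : a != b -> 0 < r -> 0 < s -> apart (sign a * r) r (sign b * s) s.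
Proof. by case: a; case: b => //= _ ? ?; rewrite /apart /sign; lra. Qed.

Lemma Rabs_sign_mul a r : 0 < r -> Rabs (0 - sign a * r) <= r.
Proof. by move=> r_gt0; apply: Rabs_le; case: a; rewrite /sign; lra. Qed.

Section Towers.

Variables (r : nat -> R) (column : nat -> quadrant) (bottom : nat -> R).
Hypothesis r_gt0 : forall j, 0 < r j.

(* Cube [j] has the z-axis as one of its vertical edges and occupies [bottom j, bottom j + 2 r j] in z. *)
Definition tower_center (j : nat) : pt :=
  (sign (column j).1 * r j, sign (column j).2 * r j, bottom j + r j).

Lemma tower_interiors_disjoint j k :
  column j <> column k \/ bottom j + 2 * r j <= bottom k ->
  ~ (exists x, interior3 (hcube (r j) (tower_center j)) x /\
               interior3 (hcube (r k) (tower_center k)) x).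
Proof.
move=> sep; apply: hcube_interiors_disjoint => //.
case: sep => [|stacked]; last by right; right; left; lra.
case: (column j) (column k) => [a b] [a' b'] ne.
have [a_eq | a_ne] := eqVneq a a'; last by left; apply: apart_sign.
have b_ne : b != b' by apply/eqP => b_eq; apply: ne; rewrite a_eq b_eq.
by right; left; apply: apart_sign.
Qed.

Lemma tower_contact j k z :
  bottom j <= z <= bottom j + 2 * r j -> bottom k <= z <= bottom k + 2 * r k ->
  exists x, hcube (r j) (tower_center j) x /\ hcube (r k) (tower_center k) x.
Proof.
move=> z_j z_k; exists (0, 0, z).
by split; apply/hcubeP => //; do 2?split; try apply: Rabs_sign_mul => //; apply: Rabs_le; lra.
Qed.

End Towers.

Lemma exists_argmin (T : finType) (x0 : T) (f : T -> R) : exists i, forall j, f i <= f j.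
Proof.
suff [i min_i] : exists i, forall j, j \in enum T -> f i <= f j.
  by exists i => j; apply: min_i; rewrite mem_enum.
elim: (enum T) => [|a s [i min_i]]; first by exists x0.
have [le_ai | lt_ia] := Rle_lt_dec (f a) (f i).
- by exists a => j; rewrite inE => /predU1P[-> | /min_i]; lra.
- by exists i => j; rewrite inE => /predU1P[-> | /min_i]; lra.
Qed.

Definition argmin (T : finType) (x0 : T) (f : T -> R) : T :=
  proj1_sig (constructive_indefinite_description _ (exists_argmin x0 f)).

Lemma argmin_le (T : finType) (x0 : T) (f : T -> R) j : f (argmin x0 f) <= f j.
Proof. by rewrite /argmin; case: constructive_indefinite_description. Qed.

(* Seed cube [j < 8] stands in quadrant [seed_column j], below z = 0 if [j < 4] and above otherwise. *)
Definition seed_column (j : nat) : quadrant := (odd j, odd j./2).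

Definition seed_index (q : quadrant) : nat := q.1 + q.2.*2.

Lemma seed_column_eq j k : (j < k < 8)%N -> seed_column j = seed_column k -> (j < 4 <= k)%N.
Proof.
by move: j k => [|[|[|[|[|[|[|[|j]]]]]]]] [|[|[|[|[|[|[|[|k]]]]]]]] //= /andP[]; rewrite ?ltnS ?ltn0.
Qed.

Lemma seed_column_index q : seed_column (4 + seed_index q) = q.
Proof. by case: q => [[] []]. Qed.

Lemma seed_index_lt q : (seed_index q < 4)%N.
Proof. by case: q => [[] []]. Qed.

(* Number of earlier cubes that cube [k] of the construction touches. *)
Definition back_degree (k : nat) : nat := if (k < 8)%N then k else 4%N.

Section Greedy.

Variable r : nat -> R.

(* [height m q]: height of tower [q] once the cubes [0, ..., 7 + m] are placed. *)
Fixpoint height (m : nat) : quadrant -> R :=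
  if m is m'.+1 then fun q =>
    if q == argmin (true, true) (height m') then height m' q + 2 * r (8 + m') else height m' q
  else fun q => 2 * r (4 + seed_index q).

Definition column (j : nat) : quadrant :=
  if (j < 8)%N then seed_column j else argmin (true, true) (height (j - 8)).

Definition bottom (j : nat) : R :=
  if (j < 4)%N then - (2 * r j) else if (j < 8)%N then 0 else height (j - 8) (column j).

Fixpoint top (m : nat) (q : quadrant) : nat :=
  if m is m'.+1 then (if q == column (8 + m') then (8 + m')%N else top m' q)
  else (4 + seed_index q)%N.

Lemma column_greedy m : column (8 + m) = argmin (true, true) (height m).
Proof. by rewrite /column ltnNge leq_addr addKn. Qed.

Lemma bottom_greedy m : bottom (8 + m) = height m (column (8 + m)).
Proof.
rewrite /bottom; have [-> ->] : (8 + m < 4)%N = false /\ (8 + m < 8)%N = false by lia.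
by rewrite addKn.
Qed.

Lemma heightS m q :
  height m.+1 q = if q == column (8 + m) then height m q + 2 * r (8 + m) else height m q.
Proof. by rewrite column_greedy. Qed.

Lemma bottom_greedy_min m q : bottom (8 + m) <= height m q.
Proof. by rewrite bottom_greedy column_greedy; apply: argmin_le. Qed.

Hypothesis r_gt0 : forall j, 0 < r j.

Lemma bottom_seed j : (j < 8)%N -> bottom j <= 0 <= bottom j + 2 * r j.
Proof. by move=> j_lt8; have := r_gt0 j; rewrite /bottom j_lt8; case: ifP => _; lra. Qed.

Lemma height_le_heightS m q : height m q <= height m.+1 q.
Proof. by rewrite heightS; case: ifP => _; have := r_gt0 (8 + m); lra. Qed.

Record top_spec (m : nat) (q : quadrant) : Prop := {
  top_lt : (top m q < 8 + m)%N;
  column_top : column (top m q) = q;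
  height_top : height m q = bottom (top m q) + 2 * r (top m q);
  bottom_top_le : forall q', bottom (top m q) <= height m q';
  height_ge : forall j, (j < 8 + m)%N -> column j = q -> bottom j + 2 * r j <= height m q }.

Lemma top_spec0 q : top_spec 0 q.
Proof.
pose t := (4 + seed_index q)%N.
have /andP[t_ge4 t_lt8] : (4 <= t < 8)%N by rewrite /t; have := seed_index_lt q; lia.
have bot_t : bottom t = 0 by rewrite /bottom ltnNge t_ge4 t_lt8.
have r_t := r_gt0 t.
split => /=; rewrite -/t ?bot_t ?addn0.
- by [].
- by rewrite /column t_lt8 seed_column_index.
- lra.
- by move=> q'; have := r_gt0 (4 + seed_index q'); lra.
move=> j j_lt8 col_j; rewrite /column j_lt8 -(seed_column_index q) -/t in col_j.
have [j_lt4 | j_ge4] := ltnP j 4; first by rewrite /bottom j_lt4; lra.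
have -> : j = t.
  case: (ltngtP j t) => // [lt | gt].
  - by have := @seed_column_eq j t ltac:(lia) col_j; lia.
  - by have := @seed_column_eq t j ltac:(lia) (esym col_j); lia.
by rewrite bot_t; lra.
Qed.

Lemma top_specS m q : (forall q, top_spec m q) -> top_spec m.+1 q.
Proof.
move=> spec; have [lt_top col_top h_top bot_le h_ge] := spec q.
have grow q' : height m q' <= height m.+1 q' := height_le_heightS m q'.
have r_new := r_gt0 (8 + m).
have j_cases j : (j < 8 + m.+1)%N -> j = (8 + m)%N \/ (j < 8 + m)%N by lia.
have topS : top m.+1 q = if q == column (8 + m) then (8 + m)%N else top m q by [].
case: (eqVneq q (column (8 + m))) => [q_eq | q_ne].
- split; rewrite ?topS ?heightS ?q_eq ?eqxx //.
  + by rewrite bottom_greedy.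
  + by move=> q'; apply: Rle_trans (bottom_greedy_min m q') (grow q').
  + move=> j /j_cases[-> | j_lt] col_j; first by rewrite bottom_greedy; lra.
    by have := h_ge j j_lt (etrans col_j (esym q_eq)); rewrite -q_eq; lra.
- split; rewrite ?topS ?heightS (negPf q_ne) //; first lia.
  + by move=> q'; apply: Rle_trans (bot_le q') (grow q').
  + move=> j /j_cases[j_eq | j_lt] col_j; first by rewrite -col_j j_eq eqxx in q_ne.
    exact: h_ge.
Qed.

Lemma top_specP m q : top_spec m q.
Proof. by elim: m q => [|m IHm] q; [apply: top_spec0 | apply: top_specS]. Qed.

Lemma bottom_stacked j k : (j < k)%N -> column j = column k -> bottom j + 2 * r j <= bottom k.
Proof.
move=> j_lt_k col_eq; have [k_lt8 | k_ge8] := ltnP k 8.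
  have [j_lt4 k_ge4] : (j < 4)%N /\ (4 <= k)%N.
    by move: col_eq; rewrite /column k_lt8 ifT; [move/seed_column_eq; lia | lia].
  by rewrite /bottom j_lt4 ifF ?k_lt8; [lra | lia].
have [m k_eq] : exists m, k = (8 + m)%N by exists (k - 8)%N; lia.
by subst k; rewrite bottom_greedy; apply: (height_ge (top_specP _ _) j_lt_k col_eq).
Qed.

Lemma greedy_interiors_disjoint j k : j <> k ->
  ~ (exists x, interior3 (hcube (r j) (tower_center r column bottom j)) x /\
               interior3 (hcube (r k) (tower_center r column bottom k)) x).
Proof.
wlog j_lt_k : j k / (j < k)%N.
  move=> lt_case ne; case: (ltngtP j k) => [lt | gt |] //; first exact: lt_case.
  by move=> [x [in_j in_k]]; apply: (lt_case k j gt); [move/esym | exists x].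
move=> _; apply: tower_interiors_disjoint => //.
case: (eqVneq (column j) (column k)) => [col_eq | /eqP col_ne]; [right | by left].
exact: bottom_stacked.
Qed.

Lemma greedy_contacts_before k : exists s : seq nat,
  [/\ uniq s, size s = back_degree k &
      forall j, j \in s -> (j < k)%N /\
        exists x, hcube (r j) (tower_center r column bottom j) x /\
                  hcube (r k) (tower_center r column bottom k) x].
Proof.
rewrite /back_degree; have [k_lt8 | k_ge8] := ltnP k 8.
  exists (iota 0 k); split; rewrite ?iota_uniq ?size_iota // => j.
  rewrite mem_iota add0n => j_lt_k; split => //.
  by apply: (tower_contact column r_gt0 (z := 0)); apply: bottom_seed => //; lia.
have [m k_eq] : exists m, k = (8 + m)%N by exists (k - 8)%N; lia.
subst k; exists (map (top m) (enum {: quadrant})); split.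
- rewrite map_inj_uniq ?enum_uniq // => q q' eq_top.
  by rewrite -(column_top (top_specP m q)) eq_top (column_top (top_specP m q')).
- by rewrite size_map -cardE card_prod card_bool.
move=> _ /mapP[q _ ->]; have [lt_top _ h_top bot_le _] := top_specP m q.
split => //; apply: (tower_contact column r_gt0 (z := bottom (8 + m))).
- split; last by rewrite -h_top; apply: bottom_greedy_min.
  by rewrite bottom_greedy; apply: bot_le.
- by have := r_gt0 (8 + m); lra.
Qed.

End Greedy.

Lemma contactP n (r : 'I_n -> R) p i j : reflect (contact r p i j) (contactb r p i j).
Proof. by rewrite /contactb; case: excluded_middle_informative => h; constructor. Qed.

Lemma card_pairs (T : finType) (P : T -> T -> bool) :
  #|[set ij : T * T | P ij.1 ij.2]| = (\sum_k #|[set j | P j k]|)%N.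
Proof.
rewrite -sum1_card (eq_bigl (fun ij : T * T => xpredT ij.1 && P ij.1 ij.2)); last first.
  by move=> ij; rewrite inE.
rewrite -(pair_big_dep xpredT P (fun _ _ => 1%N)) (exchange_big_dep xpredT) //=.
by apply: eq_bigr => k _; rewrite -sum1_card; apply: eq_bigl => j; rewrite inE.
Qed.

Lemma num_contacts_sum n (r : 'I_n -> R) p :
  num_contacts r p = (\sum_(k < n) #|[set j : 'I_n | (j < k)%N && contactb r p j k]|)%N.
Proof. exact: card_pairs. Qed.

Lemma size_le_contacts_before n (r : 'I_n -> R) p (k : 'I_n) (s : seq 'I_n) :
  uniq s -> (forall j, j \in s -> (j < k)%N /\ contact r p j k) ->
  (size s <= #|[set j : 'I_n | (j < k)%N && contactb r p j k]|)%N.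
Proof.
move=> s_uniq s_contact; rewrite -(card_uniqP s_uniq); apply: subset_leq_card.
by apply/subsetP => j /s_contact[j_lt /contactP j_contact]; rewrite inE j_lt j_contact.
Qed.

Lemma sum_back_degree n : (7 <= n)%N -> (3 * n - 3 < \sum_(k < n) back_degree k)%N.
Proof.
move=> n_ge7; rewrite -(big_mkord xpredT back_degree).
have [m ->] : exists m, n = (m + 7)%N by exists (n - 7)%N; lia.
elim: m => [|m IHm]; first by rewrite !big_nat_recr //= big_geq.
rewrite addSn big_nat_recr //=.
have : (3 <= back_degree (m + 7))%N by rewrite /back_degree; case: ifP; lia.
lia.
Qed.

Theorem proposition24 (n : nat) (r : 'I_n -> R) :
  (7 <= n)%N -> (forall i : 'I_n, Rlt 0 (r i)) ->
  exists p : 'I_n -> pt, is_packing r p /\ (3 * n - 3 < num_contacts r p)%N.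
Proof.
case: n r => [|n] r n_ge7 r_gt0 //.
pose s k := r (inord k).
have s_gt0 k : 0 < s k by apply: r_gt0.
have r_s (i : 'I_n.+1) : r i = s i by rewrite /s inord_val.
have inordK_lt k (i : 'I_n.+1) : (k < i)%N -> nat_of_ord (inord k : 'I_n.+1) = k.
  by move=> lt; rewrite inordK //; have := ltn_ord i; lia.
exists (tower_center s (column s) (bottom s)); split.
  move=> i j ne_ij; rewrite !r_s; apply: greedy_interiors_disjoint => // eq_ij.
  by apply: ne_ij; apply: val_inj.
rewrite num_contacts_sum; apply: leq_trans (sum_back_degree n_ge7) _.
apply: leq_sum => k _.
have [js [js_uniq js_size js_contact]] := greedy_contacts_before s_gt0 k.
rewrite -js_size -(size_map (inord : nat -> 'I_n.+1)); apply: size_le_contacts_before.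
  rewrite map_inj_in_uniq // => a b /js_contact[a_lt _] /js_contact[b_lt _] eq_ab.
  by rewrite -(inordK_lt a k) // -(inordK_lt b k) // eq_ab.
move=> _ /mapP[j /js_contact[j_lt j_contact] ->].
by rewrite /contact !r_s !(inordK_lt j k j_lt).
Qed.
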